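(* Let $F:\mathbb{F}_{2^n}\to\mathbb{F}_{2^n}$ be differentially $4$-uniform. Let $A=\{(a,c,d):\exists\,b\text{ with }\mathrm{EBCT}_F(a,b,c,d)=4\}$ and $B=\{(c,d,b):\exists\,a\text{ with }\mathrm{EBCT}_F(a,b,c,d)=4\}$. For $a,b,c,d\in\mathbb{F}_{2^n}^*$: $\mathrm{EBCT}_F(a,b,c,d)=2$ if and only if $\mathrm{LBCT}_F(a,c,d)=\mathrm{UBCT}_F(c,d,b)=2$. Furthermore, for $a,c,d\in\mathbb{F}_{2^n}^*$, $(a,c,d)\in A$ if and only if $\mathrm{LBCT}_F(a,c,d)=4$; and for $c,d,b\in\mathbb{F}_{2^n}^*$, $(c,d,b)\in B$ if and only if $\mathrm{UBCT}_F(c,d,b)=4$.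
   Context: $\mathrm{DDT}_F(a,b)=|\{X:F(X+a)+F(X)=b\}|$; $F$ is differentially $4$-uniform if $\mathrm{DDT}_F(a,b)\le4$ for all $a\neq0$, $b$. For any function $F$: $\mathrm{EBCT}_F(a,b,c,d)=|\{X: F(X)+F(X+a)=b,\ F(X)+F(X+c)=d,\ F(X+a+c)+F(X+a)=d\}|$; $\mathrm{LBCT}_F(a,b,c)=|\{X: \exists Y,\ X+Y=b,\ F(X+a)+F(Y+a)=c,\ F(X)+F(Y)=c\}|$; $\mathrm{UBCT}_F(a,b,c)=|\{X: \exists Y,\ F(X+a)+F(Y+a)=c,\ F(X)+F(Y)=c,\ F(X)+F(X+a)=b\}|$ (variables in $\mathbb{F}_{2^n}$). *)

(* F_{2^n} is modelled as a finite field K with #|K| = 2^n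
   (hence of characteristic 2, so "+" is the XOR-like addition). *)
From mathcomp Require Import all_boot all_algebra all_field.
Set Implicit Arguments. Unset Strict Implicit. Unset Printing Implicit Defensive.
Import GRing.Theory.
Local Open Scope ring_scope.

Section Tables.
Variable K : finFieldType.
Variable F : K -> K.

Definition DDT (a b : K) : nat := #|[set X : K | F (X + a) + F X == b]|.

Definition diff_4_uniform : Prop :=
  forall a b : K, a != 0 -> (DDT a b <= 4)%N.

Definition EBCT (a b c d : K) : nat :=
  #|[set X : K | [&& F X + F (X + a) == b,
                     F X + F (X + c) == d &
                     F (X + a + c) + F (X + a) == d]]|.

Definition LBCT (a b c : K) : nat :=
  #|[set X : K | [exists Y : K, [&& X + Y == b,
                                   F (X + a) + F (Y + a) == c &
                                   F X + F Y == c]]]|.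

Definition UBCT (a b c : K) : nat :=
  #|[set X : K | [exists Y : K, [&& F (X + a) + F (Y + a) == c,
                                   F X + F Y == c &
                                   F X + F (X + a) == b]]]|.
End Tables.

From mathcomp Require Import all_boot all_algebra all_field.
Set Implicit Arguments. Unset Strict Implicit. Unset Printing Implicit Defensive.
Import GRing.Theory.
Local Open Scope ring_scope.

(** In characteristic 2 the EBCT set of [(a, b, c, d)] is stable under the
    translations by [a] and by [c].  For [a != c] a nonempty EBCT set thus
    contains a coset of [{0, a, c, a + c}], while for [a = c] it is empty or the
    whole solution set [T] of [F X + F (X + c) = d]; as it lies inside [T],
    which has at most 4 elements, every nonempty EBCT set equals [T].  The LBCT
    set of [(a, c, d)] and the UBCT set of [(c, d, b)] also lie in [T] and are
    the unions of the EBCT sets over [b], resp. over [a], so they are empty or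
    equal to [T] as well.  For the value 2 the extra information is that
    [#|T| = 2 < 4] forces [a = c] and [b = d]. *)

Section Char2.

Variable K : finFieldType.
Hypothesis K2 : 2%N \in [pchar K].

Lemma addrKc2 (x y : K) : x + y + y = x.
Proof. by rewrite -addrA (addrr_pchar2 K2) addr0. Qed.

Lemma addKrc2 (x y : K) : x + (x + y) = y.
Proof. by rewrite addrA (addrr_pchar2 K2) add0r. Qed.

Lemma pair_sum_swap (x x' y y' d : K) :
  x + x' = d -> y + y' = d -> x' + y' = x + y.
Proof.
move=> <- e; have -> : y' = y + (x + x') by rewrite -e addKrc2.
by rewrite addrC -addrA addrKc2 addrC.
Qed.

Lemma card_addr_closed_ge4 (S : {set K}) (a c X : K) :
  a != 0 -> c != 0 -> a != c ->
  {in S, forall Y, Y + a \in S} -> {in S, forall Y, Y + c \in S} ->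
  X \in S -> (4 <= #|S|)%N.
Proof.
move=> a0 c0 ac Sa Sc XS.
have ac0 : a + c != 0 by rewrite addr_eq0 (oppr_pchar2 K2).
have uniq_orbit : uniq [seq X + t | t <- [:: 0; a; c; a + c]].
  rewrite (map_inj_uniq (addrI X)) /= !inE !negb_or ![0 == _]eq_sym a0 c0 ac0 ac.
  rewrite -{1}[a]addr0 (inj_eq (addrI a)) eq_sym c0 [a + c]addrC.
  by rewrite -{1}[c]addr0 (inj_eq (addrI c)) eq_sym a0.
have := card_uniqP uniq_orbit; rewrite size_map /= => <-.
apply: subset_leq_card; apply/subsetP => Y.
by rewrite !inE => /or4P [] /eqP ->; rewrite ?addr0 ?addrA; auto.
Qed.

Variable F : K -> K.

Definition diff_fiber (c d : K) := [set X | F X + F (X + c) == d].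

Definition ebct_set (a b c d : K) :=
  [set X | [&& F X + F (X + a) == b, F X + F (X + c) == d &
               F (X + a + c) + F (X + a) == d]].

Definition lbct_set (a c d : K) :=
  [set X | (X \in diff_fiber c d) && (X + a \in diff_fiber c d)].

Definition ubct_set (c d b : K) :=
  [set X | [exists Y, [&& F (X + c) + F (Y + c) == b, F X + F Y == b &
                          F X + F (X + c) == d]]].

(* The partner [Y] of [X] in the definition of LBCT is forced to be [X + c]. *)
Lemma LBCTE a c d : LBCT F a c d = #|lbct_set a c d|.
Proof.
apply: eq_card => X; rewrite !inE; apply/existsP/andP => [[Y]|[h1 h2]].
  by case/and3P => /eqP <- h2 h1; rewrite addKrc2 addrAC addKrc2.
by exists (X + c); rewrite addKrc2 eqxx h1 addrAC h2.
Qed.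

Lemma lbct_sub_fiber a c d : lbct_set a c d \subset diff_fiber c d.
Proof. by apply/subsetP => X; rewrite inE => /andP []. Qed.

Lemma ubct_sub_fiber c d b : ubct_set c d b \subset diff_fiber c d.
Proof. by apply/subsetP => X; rewrite !inE => /existsP [Y /and3P []]. Qed.

Lemma lbct_setP a c d X :
  reflect (exists b, X \in ebct_set a b c d) (X \in lbct_set a c d).
Proof.
rewrite !inE; apply: (iffP andP) => [[h1 h2]|[b]].
  by exists (F X + F (X + a)); rewrite inE eqxx h1 addrC h2.
by rewrite inE => /and3P [_ -> h2]; rewrite addrC h2.
Qed.

Lemma ubct_setP c d b X :
  reflect (exists a, X \in ebct_set a b c d) (X \in ubct_set c d b).
Proof.
rewrite inE; apply: (iffP existsP) => [[Y /and3P [/eqP h1 /eqP h2 h3]]|[a]].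
  exists (X + Y); rewrite inE addKrc2 h2 h3 eqxx /= addrC.
  by rewrite (pair_sum_swap h2 h1) (eqP h3).
rewrite inE => /and3P [/eqP h1 /eqP h2 /eqP h3]; exists (X + a).
by rewrite h1 h2 !eqxx !andbT (pair_sum_swap h2 (etrans (addrC _ _) h3)) h1.
Qed.

Lemma ebct_sub_lbct a b c d : ebct_set a b c d \subset lbct_set a c d.
Proof. by apply/subsetP => X XE; apply/lbct_setP; exists b. Qed.

Lemma ebct_sub_ubct a b c d : ebct_set a b c d \subset ubct_set c d b.
Proof. by apply/subsetP => X XE; apply/ubct_setP; exists a. Qed.

Lemma ebct_sub_fiber a b c d : ebct_set a b c d \subset diff_fiber c d.
Proof. exact: subset_trans (ebct_sub_lbct a b c d) (lbct_sub_fiber a c d). Qed.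

Lemma ebct_set_diag c d : ebct_set c d c d = diff_fiber c d.
Proof. by apply/setP => X; rewrite !inE addrKc2 !andbb. Qed.

Lemma ebct_set_neq0 a b c d X : b != 0 -> X \in ebct_set a b c d -> a != 0.
Proof.
move=> b0; apply: contraTneq => ->.
by rewrite inE addr0 (addrr_pchar2 K2) eq_sym (negbTE b0).
Qed.

Lemma ebct_set_addr_a a b c d X :
  X \in ebct_set a b c d -> X + a \in ebct_set a b c d.
Proof.
rewrite !inE => /and3P [h1 h2 h3].
by rewrite !addrKc2 addrC h1 addrC h3 addrC h2.
Qed.

Lemma ebct_set_addr_c a b c d X :
  X \in ebct_set a b c d -> X + c \in ebct_set a b c d.
Proof.
rewrite !inE => /and3P [/eqP h1 /eqP h2 /eqP h3].
rewrite [X + c + a]addrAC !addrKc2 [F (X + c) + F X]addrC h2.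
by rewrite [F (X + a) + _]addrC h3 (pair_sum_swap h2 (etrans (addrC _ _) h3)) h1 !eqxx.
Qed.

Lemma ebct_set_dichotomy a b c d X :
  a != 0 -> c != 0 -> X \in ebct_set a b c d ->
  (4 <= #|ebct_set a b c d|)%N \/ (a = c /\ b = d).
Proof.
move=> a0 c0 XE; have [ac|ac] := eqVneq a c.
  by right; move: XE; rewrite inE ac => /and3P [/eqP <- /eqP <- _].
left; apply: card_addr_closed_ge4 a0 c0 ac _ _ XE => Y.
  exact: ebct_set_addr_a.
exact: ebct_set_addr_c.
Qed.

Hypothesis F4 : diff_4_uniform F.

Lemma card_diff_fiber c d : c != 0 -> (#|diff_fiber c d| <= 4)%N.
Proof.
move=> c0; apply: leq_trans (F4 d c0); apply: subset_leq_card.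
by apply/subsetP => X; rewrite !inE addrC.
Qed.

Lemma ebct_set_fiber a b c d X :
  a != 0 -> c != 0 -> X \in ebct_set a b c d ->
  ebct_set a b c d = diff_fiber c d.
Proof.
move=> a0 c0 XE; have [E4|[-> ->]] := ebct_set_dichotomy a0 c0 XE.
  apply/eqP; rewrite eqEcard ebct_sub_fiber /=.
  exact: leq_trans (card_diff_fiber d c0) E4.
exact: ebct_set_diag.
Qed.

Lemma lbct_set_fiber a b c d X :
  a != 0 -> c != 0 -> X \in ebct_set a b c d ->
  lbct_set a c d = diff_fiber c d.
Proof.
move=> a0 c0 XE; apply/eqP; rewrite eqEsubset lbct_sub_fiber.
by rewrite -(ebct_set_fiber a0 c0 XE) ebct_sub_lbct.
Qed.

Lemma ubct_set_fiber a b c d X :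
  a != 0 -> c != 0 -> X \in ebct_set a b c d ->
  ubct_set c d b = diff_fiber c d.
Proof.
move=> a0 c0 XE; apply/eqP; rewrite eqEsubset ubct_sub_fiber.
by rewrite -(ebct_set_fiber a0 c0 XE) ebct_sub_ubct.
Qed.

Lemma card_lbct_set a c d k : a != 0 -> c != 0 -> (0 < k)%N ->
  (exists b, #|ebct_set a b c d| = k) <-> #|lbct_set a c d| = k.
Proof.
move=> a0 c0 k0; split=> [[b Ek]|Lk].
  have /set0Pn [X XE] : ebct_set a b c d != set0 by rewrite -card_gt0 Ek.
  by rewrite (lbct_set_fiber a0 c0 XE) -(ebct_set_fiber a0 c0 XE).
have /set0Pn [X /lbct_setP [b XE]] : lbct_set a c d != set0 by rewrite -card_gt0 Lk.
by exists b; rewrite (ebct_set_fiber a0 c0 XE) -(lbct_set_fiber a0 c0 XE).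
Qed.

Lemma card_ubct_set c d b k : b != 0 -> c != 0 -> (0 < k)%N ->
  (exists a, #|ebct_set a b c d| = k) <-> #|ubct_set c d b| = k.
Proof.
move=> b0 c0 k0; split=> [[a Ek]|Uk].
  have /set0Pn [X XE] : ebct_set a b c d != set0 by rewrite -card_gt0 Ek.
  have a0 := ebct_set_neq0 b0 XE.
  by rewrite (ubct_set_fiber a0 c0 XE) -(ebct_set_fiber a0 c0 XE).
have /set0Pn [X /ubct_setP [a XE]] : ubct_set c d b != set0 by rewrite -card_gt0 Uk.
have a0 := ebct_set_neq0 b0 XE.
by exists a; rewrite (ebct_set_fiber a0 c0 XE) -(ubct_set_fiber a0 c0 XE).
Qed.

Lemma card_ebct_set_eq2 a b c d : a != 0 -> b != 0 -> c != 0 ->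
  #|ebct_set a b c d| = 2 <-> #|lbct_set a c d| = 2 /\ #|ubct_set c d b| = 2.
Proof.
move=> a0 b0 c0; split=> [E2|[L2 U2]].
  have /set0Pn [X XE] : ebct_set a b c d != set0 by rewrite -card_gt0 E2.
  rewrite (lbct_set_fiber a0 c0 XE) (ubct_set_fiber a0 c0 XE).
  by rewrite -(ebct_set_fiber a0 c0 XE).
have /set0Pn [X /lbct_setP [b' XE]] : lbct_set a c d != set0 by rewrite -card_gt0 L2.
have /set0Pn [Y /ubct_setP [a' YE]] : ubct_set c d b != set0 by rewrite -card_gt0 U2.
have a'0 := ebct_set_neq0 b0 YE.
have [|[-> _]] := ebct_set_dichotomy a0 c0 XE.
  by rewrite leqNgt (leq_ltn_trans (subset_leq_card (ebct_sub_lbct _ _ _ _))) ?L2.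
have [|[_ ->]] := ebct_set_dichotomy a'0 c0 YE.
  by rewrite leqNgt (leq_ltn_trans (subset_leq_card (ebct_sub_ubct _ _ _ _))) ?U2.
by rewrite ebct_set_diag -(lbct_set_fiber a0 c0 XE).
Qed.

End Char2.

Theorem mainTheorem10 (n : nat) (K : finFieldType) (F : K -> K) :
  #|K| = (2 ^ n)%N ->
  diff_4_uniform F ->
  (forall a b c d : K, a != 0 -> b != 0 -> c != 0 -> d != 0 ->
     (EBCT F a b c d = 2%N <-> (LBCT F a c d = 2%N /\ UBCT F c d b = 2%N)))
  /\ (forall a c d : K, a != 0 -> c != 0 -> d != 0 ->
     ((exists b : K, EBCT F a b c d = 4%N) <-> LBCT F a c d = 4%N))
  /\ (forall c d b : K, c != 0 -> d != 0 -> b != 0 ->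
     ((exists a : K, EBCT F a b c d = 4%N) <-> UBCT F c d b = 4%N)).
Proof.
move=> cardK F4; have K2 : 2%N \in [pchar K] := card_finPcharP cardK isT.
split; [|split].
- by move=> a b c d a0 b0 c0 _; rewrite (LBCTE K2); exact: card_ebct_set_eq2.
- by move=> a c d a0 c0 _; rewrite (LBCTE K2); exact: card_lbct_set.
- by move=> c d b c0 _ b0; exact: card_ubct_set.
Qed.
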